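(* Let $X \subseteq {}^\omega 2$ with $|X| = \mathfrak{c}$. Then there exists $X' \subseteq X$ with $|X'| = \mathfrak{c}$ and $X' \in s_0$.
   Context: ${}^\omega 2$ is the Cantor space; $\mathfrak c=2^{\aleph_0}$. A set $Y \subseteq {}^\omega 2$ is Marczewski null ($Y \in s_0$) if for every perfect set $P \subseteq {}^\omega 2$ there is a perfect set $Q \subseteq P$ with $Q \cap Y = \emptyset$. *)

From HB Require Import structures.
From mathcomp Require Import all_boot all_order all_algebra.
From mathcomp Require Import all_classical all_reals all_analysis.
Set Implicit Arguments. Unset Strict Implicit. Unset Printing Implicit Defensive.
Local Open Scope classical_set_scope.

Definition perfect (P : set cantor_space) : Prop :=
  P !=set0 /\ perfect_set P.

Definition marczewski_null (Y : set cantor_space) : Prop :=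
  forall P : set cantor_space, perfect P ->
    exists Q : set cantor_space, [/\ perfect Q, Q `<=` P & Q `&` Y = set0].

(* If every perfect set contains a perfect subset meeting X in fewer than c points, then
   X itself is Marczewski null, since a perfect set contains c pairwise disjoint perfect
   subsets. Otherwise X meets every perfect subset of some perfect Z in c points; pulling X
   back along an embedding of the Cantor space onto a subset of Z gives a set Y meeting
   every perfect set in c points. Enumerate all perfect sets as (P_a) along a well-order of
   type c and choose, by transfinite recursion, points x_a in Y and perfect Q_a in P_a such
   that Q_a avoids every x_b and x_a lies in no Q_b; then {x_a} is the required set. To find
   x_a, shrink each Q_b beforehand so that it either lies in one fibre of the projection to
   the odd coordinates or is mapped injectively by it; a fibre avoided by all these fibres
   then meets each earlier Q_b in at most one point, but it meets Y in c points. *)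

From HB Require Import structures.
From mathcomp Require Import all_boot all_order all_algebra.
From mathcomp Require Import all_classical all_reals all_analysis.
From mathcomp Require Import wochoice.
Unset Printing Implicit Defensive.
Local Open Scope classical_set_scope.
Local Notation C := cantor_space.

Definition agree n (x y : C) := forall i, (i < n)%N -> x i = y i.

Lemma agree_sym {n} {x y : C} : agree n x y -> agree n y x.
Proof. by move=> xy i /xy ->. Qed.

Lemma agree_trans {n} {x y z : C} : agree n x y -> agree n y z -> agree n x z.
Proof. by move=> xy yz i ni; rewrite xy // yz. Qed.

Lemma agree_le {m n} {x y : C} : (m <= n)%N -> agree n x y -> agree m x y.
Proof. by move=> mn xy i im; apply: xy; apply: leq_trans mn. Qed.

Lemma agree_nbhs (x : C) n : nbhs x (agree n x).
Proof.
elim: n => [|n IH]; first exact: filterS (filterT : nbhs x setT).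
have xn : nbhs x (proj n @^-1` [set x n]).
  apply: open_nbhs_nbhs; split => //; apply: open_comp; last exact: discrete_open.
  by move=> + _; exact: proj_continuous.
apply: filterS (filterI IH xn) => y [xy /= xyn] i.
by rewrite ltnS leq_eqVlt => /predU1P[->|/xy //]; rewrite -xyn.
Qed.

Lemma nbhs_agree (x : C) U : nbhs x U -> exists n, agree n x `<=` U.
Proof.
move=> xU; apply: contrapT => /forallNP nU.
have /choice[g gP] : forall n, exists y, agree n x y /\ ~ U y.
  by move=> n; have /existsNP[y /not_implyP] := nU n; exists y.
have g_x : g @ \oo --> x.
  apply/cvg_sup => N V [W] [[Z] oZ <-] ZxN WV; apply: (filterS WV).
  by exists N.+1 => // i /= Ni; rewrite -(gP i).1.
have [N _ gN] := g_x U xU.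
exact: (gP N).2 (gN N (leqnn N)).
Qed.

Definition cclosed (A : set C) :=
  forall x, (forall n, exists y, A y /\ agree n x y) -> A x.

Definition cperfect (P : set C) :=
  [/\ P !=set0, cclosed P &
      forall x, P x -> forall n, exists y, [/\ y <> x, P y & agree n x y]].

Definition ccontinuous (f : C -> C) :=
  forall z n, exists m, forall z', agree m z z' -> agree n (f z) (f z').

Lemma closedE (A : set C) : closed A <-> cclosed A.
Proof.
split=> [clA x Ax | clA x Ax]; last first.
  by apply: clA => n; have [y [? ?]] := Ax _ (agree_nbhs x n); exists y.
apply: clA => U /nbhs_agree[n nU].
by have [y [Ay xy]] := Ax n; exists y; split => //; exact: nU.
Qed.

Lemma perfectE (P : set C) : perfect P <-> cperfect P.
Proof.
have lpE x : limit_point P x <-> forall n, exists y, [/\ y <> x, P y & agree n x y].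
  split=> [xlp n | xlp U /nbhs_agree[n nU]].
    by have [y [/eqP ? ? ?]] := xlp _ (agree_nbhs x n); exists y.
  by have [y [yx ? ?]] := xlp n; exists y; split => //; [exact/eqP | exact: nU].
split=> [[P0 [clP lpP]] | [P0 clP lpP]].
  split=> // [|x Px]; first exact/closedE.
  by apply/lpE; rewrite lpP.
split=> //; split; first exact/closedE.
rewrite eqEsubset; split=> x; last by move=> /lpP/lpE.
by move=> /lpE xlp; apply: clP => n; have [y [_ ? ?]] := xlp n; exists y.
Qed.

Lemma ccontinuous_continuous f : ccontinuous f -> continuous f.
Proof.
move=> fc z U /nbhs_agree[n nU]; have [m fm] := fc z n.
by apply: filterS (agree_nbhs z m) => z' /fm; exact: nU.
Qed.

Lemma cclosed_image {f A} : ccontinuous f -> cclosed A -> cclosed (f @` A).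
Proof.
move=> /ccontinuous_continuous fc /closedE clA; apply/closedE.
apply: (compact_closed cantor_space_hausdorff); apply: continuous_compact.
  exact: continuous_subspaceT.
exact: subclosed_compact clA cantor_space_compact _.
Qed.

Lemma cclosed_not_agree n (z : C) : cclosed [set y | ~ agree n z y].
Proof. by move=> x Ax zx; have [y [zy xy]] := Ax n; apply: zy; exact: agree_trans xy. Qed.

Lemma cclosed_cylinder_disjoint {A p} : cclosed A -> ~ A p ->
  exists k, forall w, A w -> ~ agree k p w.
Proof.
move=> clA Ap; apply: contrapT => /forallNP nk; apply: Ap; apply: clA => k.
by have /existsNP[y /not_implyP[Ay /contrapT ?]] := nk k; exists y.
Qed.

Lemma cperfectT : cperfect [set: C].
Proof.
split=> // [|x _ n]; first by exists point.
exists (fun i => if i == n then ~~ x i else x i); split=> //.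
  by move/(congr1 (fun g => g n)); rewrite eqxx; case: (x n).
by move=> i ni; rewrite (ltn_eqF ni).
Qed.

Lemma cperfect_image {f A} : ccontinuous f -> injective f ->
  cperfect A -> cperfect (f @` A).
Proof.
move=> fc finj [[a Aa] clA lpA]; split; first by exists (f a), a.
  exact: cclosed_image.
move=> _ [z Az <-] n; have [m fm] := fc z n.
have [z' [zz' Az' zm]] := lpA z Az m.
by exists (f z'); split; [move/finj | exists z' | exact: fm].
Qed.

Lemma cperfect_preimage {f P} : ccontinuous f -> injective f ->
  cperfect P -> P `<=` range f -> cperfect (f @^-1` P).
Proof.
move=> fc finj [[p Pp] clP lpP] Pf; split.
- by have [z _ fz] := Pf p Pp; exists z; rewrite /preimage /= fz.
- move=> z zP; apply: clP => n; have [m fm] := fc z n.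
  by have [z' [Pz' zz']] := zP m; exists (f z'); split; last exact: fm.
move=> z Pz n.
(* [f] is a closed embedding: the image of the complement of a cylinder is closed. *)
have nfz : ~ (f @` [set y | ~ agree n z y]) (f z).
  by move=> [y zy /finj yz]; apply: zy; rewrite yz.
have [k fk] := cclosed_cylinder_disjoint (cclosed_image fc (cclosed_not_agree n z)) nfz.
have [y [yfz Py fzy]] := lpP _ Pz k; have [z' _ fz'] := Pf y Py.
exists z'; split; first by move=> zz; apply: yfz; rewrite -fz' zz.
  by rewrite /preimage /= fz'.
by apply: contrapT => nz; apply: (fk y) => //; exists z'.
Qed.

Lemma cperfect_cylinder {P} m {r : C} : cperfect P -> P r -> cperfect (P `&` agree m r).
Proof.
move=> [_ clP lpP] Pr; split; first by exists r.
  move=> x xP; split; first by apply: clP => n; have [y [[Py _] ?]] := xP n; exists y.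
  by have [y [[_ ry] xy]] := xP m; exact: agree_trans ry (agree_sym xy).
move=> x [Px rx] n; have [y [yx Py xy]] := lpP x Px (maxn n m).
exists y; split => //; last exact: agree_le (leq_maxl _ _) xy.
by split => //; exact: agree_trans rx (agree_le (leq_maxr _ _) xy).
Qed.

Definition splits (P : set C) (pr : nat -> Prop) := forall m r, P r ->
  exists x y k, [/\ P x, P y, agree m r x & agree m r y] /\ (pr k /\ x k <> y k).

Lemma first_diff {z z' : C} : z <> z' -> exists n, agree n z z' /\ z n <> z' n.
Proof.
move=> zz'; have zn : exists n, z n != z' n.
  apply: contrapT => /forallNP zn; apply: zz'; apply: funext => n.
  by apply/eqP; apply: contrapT => /negP; exact: zn.
case: (ex_minnP zn) => n /eqP {}zn nmin; exists n; split => // i ni.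
by apply/eqP; apply: contraTT ni => /nmin; rewrite leqNgt.
Qed.

Section SplittingScheme.
Variables (P : set C) (pr : nat -> Prop) (x0 : C).
Hypotheses (Px0 : P x0) (clP : cclosed P) (Psplits : splits P pr).

(* A node [(m, r)] of the scheme stands for the cylinder of length [m] around [r]. *)
Definition children_spec (mr : nat * C) (nr : (nat * C) * (nat * C)) :=
  [/\ P nr.1.2, P nr.2.2, agree mr.1 mr.2 nr.1.2 & agree mr.1 mr.2 nr.2.2] /\
  [/\ (mr.1 < nr.1.1)%N, (mr.1 < nr.2.1)%N &
      exists k, [/\ pr k, (k < nr.1.1)%N, (k < nr.2.1)%N & nr.1.2 k <> nr.2.2 k]].

Lemma children_exist mr : exists nr, P mr.2 -> children_spec mr nr.
Proof.
have [Pr|nPr] := pselect (P mr.2); last by exists ((0, x0), (0, x0)).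
have [x [y [k [[Px Py rx ry] [prk xy]]]]] := Psplits mr.1 mr.2 Pr.
exists ((maxn mr.1 k).+1, x, ((maxn mr.1 k).+1, y)) => _.
by split; split; rewrite //= ?ltnS ?leq_maxl //; exists k; rewrite ltnS leq_maxr.
Qed.

Definition children mr := projT1 (cid (children_exist mr)).

Lemma childrenP {mr} : P mr.2 -> children_spec mr (children mr).
Proof. by rewrite /children; case: cid. Qed.

Fixpoint node (z : C) (n : nat) : nat * C :=
  if n is n'.+1 then (if z n' then (children (node z n')).2 else (children (node z n')).1)
  else (0%N, x0).

Lemma node_in z n : P (node z n).2.
Proof. by elim: n => //= n IH; have [[? ? ? ?] _] := childrenP IH; case: (z n). Qed.

Lemma node_step z n :
  ((node z n).1 < (node z n.+1).1)%N /\ agree (node z n).1 (node z n).2 (node z n.+1).2.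
Proof. by have [[? ? ? ?] [? ? _]] := childrenP (node_in z n); rewrite /=; case: (z n). Qed.

Lemma node_len z n : (n <= (node z n).1)%N.
Proof. by elim: n => // n IH; exact: leq_ltn_trans IH (node_step z n).1. Qed.

Lemma node_mono z {n n'} : (n <= n')%N ->
  ((node z n).1 <= (node z n').1)%N /\ agree (node z n).1 (node z n).2 (node z n').2.
Proof.
elim: n' => [|n' IH]; first by rewrite leqn0 => /eqP ->.
rewrite leq_eqVlt => /predU1P[-> //|]; rewrite ltnS => /IH[nn' zn'].
have [n'S zn'S] := node_step z n'; split; first exact: leq_trans nn' (ltnW n'S).
exact: agree_trans zn' (agree_le nn' zn'S).
Qed.

Lemma node_agree {z z' n} : agree n z z' -> node z n = node z' n.
Proof. by elim: n => // n IH zz' /=; rewrite IH ?(zz' n) //; exact: agree_le zz'. Qed.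

Definition scheme_map (z : C) : C := fun i => (node z i.+1).2 i.

Lemma scheme_map_agree z n : agree (node z n).1 (node z n).2 (scheme_map z).
Proof.
move=> i ni; have [_ zn] := node_mono z (leq_maxl n i.+1).
have [ni' zi] := node_mono z (leq_maxr n i.+1).
by rewrite /scheme_map zn // zi //; exact: leq_trans (node_len z i.+1).
Qed.

Lemma scheme_map_in z : P (scheme_map z).
Proof.
apply: clP => n; exists (node z n).2; split; first exact: node_in.
exact/agree_sym/(agree_le (node_len z n) (scheme_map_agree z n)).
Qed.

Lemma scheme_map_ccontinuous : ccontinuous scheme_map.
Proof.
move=> z n; exists n => z' /node_agree zz'.
have zn := agree_le (node_len z n) (scheme_map_agree z n).
have z'n := agree_le (node_len z' n) (scheme_map_agree z' n).
by rewrite zz' in zn; exact: agree_trans (agree_sym zn) z'n.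
Qed.

Lemma scheme_map_split z z' : z <> z' -> exists k, pr k /\ scheme_map z k <> scheme_map z' k.
Proof.
move=> /first_diff[n [/node_agree zz' zn]].
have [_ [_ _ [k [prk k1 k2 xy]]]] := childrenP (node_in z n).
exists k; split => //.
move: (scheme_map_agree z n.+1) (scheme_map_agree z' n.+1); rewrite /= -zz'.
by case: (z n) zn; case: (z' n) => // _ z1 z'1; rewrite -z1 // -z'1 // => /esym.
Qed.

End SplittingScheme.

Lemma splitting_scheme {P pr} : cperfect P -> splits P pr -> exists f, [/\ ccontinuous f,
  range f `<=` P & forall z z', z <> z' -> exists k, pr k /\ f z k <> f z' k].
Proof.
move=> [[x0 Px0] clP _] Psplits; exists (scheme_map P pr x0 Psplits); split.
- exact: scheme_map_ccontinuous.
- by move=> _ [z _ <-]; exact: scheme_map_in.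
- exact: scheme_map_split.
Qed.

Lemma split_injective {f : C -> C} {pr} :
  (forall z z', z <> z' -> exists k, pr k /\ f z k <> f z' k) -> injective f.
Proof. by move=> fsplit z z' fzz'; apply: contrapT => /fsplit[k [_]]; rewrite fzz'. Qed.

Lemma cperfect_splits {P} : cperfect P -> splits P (fun=> True).
Proof.
move=> [_ _ lpP] m r Pr; have [y [yr Py ry]] := lpP r Pr m.
have [k [_ rky]] := first_diff (nesym yr).
by exists r, y, k.
Qed.

Lemma cperfect_embedding {P} : cperfect P ->
  exists f, [/\ ccontinuous f, injective f & range f `<=` P].
Proof.
move=> Pp; have [f [fc fP fsplit]] := splitting_scheme Pp (cperfect_splits Pp).
by exists f; split => //; exact: split_injective fsplit.
Qed.

Definition odds (x : C) : C := fun n => x n.*2.+1.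
Definition evens (x : C) : C := fun n => x n.*2.
Definition interleave (u v : C) : C := fun n => if odd n then v n./2 else u n./2.
Definition fibre (y : C) := [set x | odds x = y].

Lemma odds_interleave u v : odds (interleave u v) = v.
Proof. by apply: funext => n; rewrite /odds /interleave /= odd_double uphalf_double. Qed.

Lemma evens_interleave u v : evens (interleave u v) = u.
Proof. by apply: funext => n; rewrite /evens /interleave odd_double half_double. Qed.

Lemma cperfect_fibre y : cperfect (fibre y).
Proof.
split.
- by exists (interleave y y); exact: odds_interleave.
- move=> x xy; apply: funext => k; have [x' [<- xx']] := xy k.*2.+2.
  by rewrite /odds xx'.
move=> x <- n; exists (fun i => if i == n.*2 then ~~ x i else x i); split.
- by move/(congr1 (fun g => g n.*2)); rewrite eqxx; case: (x n.*2).
- apply: funext => k; rewrite /odds; case: eqP => // /(congr1 odd).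
  by rewrite /= !odd_double.
- move=> i ni; rewrite ifF //; apply/negbTE; rewrite neq_ltn.
  by rewrite (leq_trans ni) // -addnn leq_addr.
Qed.

(* [small A] encodes [|A| < c]: no map sends [A] onto the Cantor space. *)
Definition small {T} (A : set T) :=
  ~ exists f : T -> C, forall c, exists2 a, A a & f a = c.

Lemma sub_small {T} {A B : set T} : A `<=` B -> small B -> small A.
Proof.
move=> AB sB [f fA]; apply: sB; exists f => c.
by have [a Aa fa] := fA c; exists a => //; exact: AB.
Qed.

Lemma small_image {T U} (g : T -> U) {A : set T} : small A -> small (g @` A).
Proof.
move=> sA [f fA]; apply: sA; exists (f \o g) => c.
by have [_ [a Aa <-] fa] := fA c; exists a.
Qed.

Lemma small_miss {T} {A : set T} (f : T -> C) : small A ->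
  exists c, forall a, A a -> f a <> c.
Proof.
move=> sA; apply: contrapT => /forallNP fA; apply: sA; exists f => c.
by have /existsNP[a /not_implyP[Aa /contrapT fa]] := fA c; exists a.
Qed.

Lemma small_setC {A : set C} : small A -> exists c, ~ A c.
Proof. by move=> /(small_miss id)[c Ac]; exists c => /Ac; apply. Qed.

(* Split a point of the Cantor space as [interleave u v] and miss [u] on [A], [v] on [B]. *)
Lemma small_setU {T} {A B : set T} : small A -> small B -> small (A `|` B).
Proof.
move=> sA sB [f fAB].
have [u fAu] := small_miss (evens \o f) sA.
have [v fBv] := small_miss (odds \o f) sB.
have [a [Aa|Ba] fa] := fAB (interleave u v).
- by apply: (fAu a Aa); rewrite /= fa evens_interleave.
- by apply: (fBv a Ba); rewrite /= fa odds_interleave.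
Qed.

Lemma small_set1 {T} (a : T) : small [set a].
Proof.
move=> [f fa]; have [b -> f1] := fa (fun=> true); have [b' -> f0] := fa (fun=> false).
by have := congr1 (fun x : C => x 0%N) (etrans (esym f1) f0).
Qed.

Lemma not_smallT : ~ small [set: C].
Proof. by apply; exists id => c; exists c. Qed.

Lemma cperfect_avoid_small {P A} : cperfect P -> small A ->
  exists Q, [/\ cperfect Q, Q `<=` P & forall a, A a -> ~ Q a].
Proof.
move=> Pp sA; have [f [fc finj fP]] := cperfect_embedding Pp.
have [y Ay] := small_miss (odds \o pinv setT f) sA.
exists (f @` fibre y); split.
- exact: cperfect_image fc finj (cperfect_fibre y).
- by move=> _ [z _ <-]; apply: fP; exists z.
- move=> a Aa [z zy fz]; apply: (Ay _ Aa).
  by rewrite -fz /= pinvKV ?in_setT //; exact: in2W.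
Qed.

Definition odds_typed (Q : set C) (l : option C) :=
  if l is Some y then Q `<=` fibre y
  else forall a b, Q a -> Q b -> odds a = odds b -> a = b.

Lemma sub_odds_typed Q Q' l : Q' `<=` Q -> odds_typed Q l -> odds_typed Q' l.
Proof.
case: l => [y|] /= Q'Q Ql; first exact: subset_trans Q'Q Ql.
by move=> a b /Q'Q Qa /Q'Q Qb; exact: Ql.
Qed.

Lemma cperfect_odds_typed {P} : cperfect P ->
  exists Q l, [/\ cperfect Q, Q `<=` P & odds_typed Q l].
Proof.
move=> Pp; have [Psplits|] := pselect (splits P odd).
  have [f [fc fP fsplit]] := splitting_scheme Pp Psplits.
  exists (range f), None; split => //.
    exact: cperfect_image fc (split_injective fsplit) cperfectT.
  move=> _ _ [z _ <-] [z' _ <-] fzz'; have [-> //|/fsplit[k [oddk]]] := pselect (z = z').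
  have kE : (k./2).*2.+1 = k by rewrite -[RHS](odd_double_half k) oddk.
  by rewrite -kE; have := congr1 (fun g => g k./2) fzz'.
move=> /existsNP[m /existsNP[r /not_implyP[Pr nsplit]]].
exists (P `&` agree m r), (Some (odds r)); split; first exact: cperfect_cylinder.
  by move=> ? [].
move=> x [Px rx]; apply: funext => k; apply: contrapT => xrk; apply: nsplit.
by exists x, r, k.*2.+1; split => //; rewrite oddS odd_double.
Qed.

Lemma odds_typed_fibre Q l y : exists q,
  odds_typed Q l -> l <> Some y -> forall x, Q x -> fibre y x -> x = q.
Proof.
case: l => [y'|].
  by exists point => /= Qy' yy' x /Qy' xy' xy; case: yy'; rewrite -xy' xy.
have [[q [Qq qy]]|nq] := pselect (exists q, Q q /\ fibre y q).
  by exists q => /= Qinj _ x Qx xy; apply: Qinj => //; rewrite xy qy.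
by exists point => _ _ x Qx xy; case: nq; exists x.
Qed.

(* Choosing the fibre first makes each typed set contribute at most one point to avoid. *)
Lemma odds_typed_avoid (Y : set C) (S : set (set C * option C)) (D : set C) :
  (forall P, cperfect P -> ~ small (Y `&` P)) -> small S -> small D ->
  (forall Ql, S Ql -> odds_typed Ql.1 Ql.2) ->
  exists x, [/\ Y x, ~ D (odds x) & forall Ql, S Ql -> ~ Ql.1 x].
Proof.
move=> Ybig sS sD Styped.
have [y ny] := small_setC (small_setU sD (small_image (fun Ql => odflt point Ql.2) sS)).
have Sy Ql : S Ql -> Ql.2 <> Some y.
  by move=> SQl Qly; apply: ny; right; exists Ql => //; rewrite Qly.
pose q Ql := projT1 (cid (odds_typed_fibre Ql.1 Ql.2 y)).
have [x [Yx xy nqx]] : exists x, [/\ Y x, fibre y x & ~ (q @` S) x].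
  apply: contrapT => /forallNP nx; apply: (Ybig _ (cperfect_fibre y)).
  apply: sub_small (small_image q sS) => x [Yx xy]; apply: contrapT => nqx.
  by apply: (nx x).
exists x; split => //; first by rewrite xy => Dy; apply: ny; left.
move=> Ql SQl Qx; apply: nqx; exists Ql => //; rewrite /q; case: cid => /= q' q'P.
exact/esym/(q'P (Styped _ SQl) (Sy _ SQl) x Qx xy).
Qed.

(* [code A] records which finite sequences are prefixes of points of [A]. *)
Definition code (A : set C) : C := fun n =>
  if @unpickle (seq bool) n is Some s then
    `[< exists x, A x /\ forall i, (i < size s)%N -> nth false s i = x i >]
  else false.

Lemma code_sub A B : cclosed B -> code A = code B -> A `<=` B.
Proof.
move=> clB AB x Ax; apply: clB => n.
have := congr1 (fun g => g (pickle (mkseq x n))) AB; rewrite /code pickleK.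
have -> : `[< exists y, A y /\ forall i, (i < size (mkseq x n))%N ->
    nth false (mkseq x n) i = y i >] = true.
  by apply/asboolP; exists x; split => // i; rewrite size_mkseq => ni; rewrite nth_mkseq.
move/esym/asboolP => [y [By xy]]; exists y; split => // i ni.
by have := xy i; rewrite size_mkseq nth_mkseq //; apply.
Qed.

Lemma code_inj A B : cclosed A -> cclosed B -> code A = code B -> A = B.
Proof. by move=> clA clB AB; apply/seteqP; split; apply: code_sub. Qed.

Definition worder : rel C := projT1 (well_ordering_principle C).

Lemma worder_min {A : set C} : A !=set0 ->
  exists z, A z /\ forall y, A y -> worder z y.
Proof.
move=> [a Aa].
have [|z [[zA zmin] _]] := projT2 (well_ordering_principle C) [pred w | `[< A w >]].
  by exists a; rewrite inE.
by exists z; split=> [|y Ay]; [rewrite inE in zA | apply: zmin; rewrite inE].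
Qed.

Lemma worder_wo_chain : wo_chain worder predT.
Proof. by move=> A _; exact: (projT2 (well_ordering_principle C) A). Qed.

Lemma worder_anti {x y} : worder x y -> worder y x -> x = y.
Proof. by move=> xy yx; apply: (wo_chain_antisymmetric worder_wo_chain) => //; rewrite xy. Qed.

Lemma worder_total x y : worder x y \/ worder y x.
Proof. by apply/orP; exact: (wo_chainW worder_wo_chain). Qed.

Lemma worder_trans x y z : worder x y -> worder y z -> worder x z.
Proof.
move=> xy yz; have [|w [wxyz wmin]] := @worder_min [set x; y; z].
  by exists x; left; left.
have wx : worder w x by apply: wmin; left; left.
case: wxyz => [[/= wE|/= wE]|/= wE]; subst w.
- by apply: wmin; right.
- by rewrite (worder_anti xy wx).
- by rewrite -(worder_anti yz (wmin y _)) //; left; right.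
Qed.

Definition wlt x y := worder x y /\ x <> y.

Lemma wlt_wf : well_founded wlt.
Proof.
move=> x; apply: contrapT => nx.
have [|z [nz zmin]] := @worder_min [set w | ~ Acc wlt w]; first by exists x.
apply: nz; constructor => y [yz ynz]; apply: contrapT => ny.
by apply: ynz; apply: worder_anti yz (zmin _ ny).
Qed.

Lemma wlt_trichotomy x y : [\/ wlt x y, x = y | wlt y x].
Proof.
have [->|xy] := pselect (x = y); first exact: Or32.
by case: (worder_total x y) => ?; [apply: Or31 | apply: Or33]; split => //; exact: nesym.
Qed.

Lemma wlt_trans x y z : wlt x y -> wlt y z -> wlt x z.
Proof.
move=> [xy nxy] [yz nyz]; split; first exact: worder_trans xy yz.
by move=> xz; subst z; apply: nxy; exact: worder_anti.
Qed.

(* The points with fewer than c predecessors: an initial segment of order type c. *)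
Definition before a := [set b | wlt b a].
Definition early a := small (before a).

Lemma early_wlt {a b} : early a -> wlt b a -> early b.
Proof. by move=> ea ba; apply: sub_small ea => c cb; exact: wlt_trans cb ba. Qed.

Lemma not_small_early : ~ small early.
Proof.
have [[a na]|nsmall] := pselect (exists a, ~ early a); last first.
  suff -> : early = setT by exact: not_smallT.
  by apply/seteqP; split => // a _; apply: contrapT => na; apply: nsmall; exists a.
have [|z [nz zmin]] := @worder_min [set w | ~ early w]; first by exists a.
move=> searly; apply: nz; apply: sub_small searly => b [bz nbz].
by apply: contrapT => nb; apply: nbz; exact: worder_anti bz (zmin _ nb).
Qed.

Lemma cperfect_enum : exists Pe : C -> set C,
  (forall a, cperfect (Pe a)) /\ forall P, cperfect P -> exists2 a, early a & Pe a = P.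
Proof.
have /contrapT[en en_onto] := not_small_early.
exists (fun a => if pselect (exists2 P, cperfect P & code P = en a) is left h
  then projT1 (cid2 h) else setT); split => [a|P Pp].
  by case: pselect => [h|_]; [case: cid2 | exact: cperfectT].
have [a ea enP] := en_onto (code P); exists a => //.
case: pselect => [h|[]]; last by exists P.
case: cid2 => Q [_ clQ _] /= Qa; apply: code_inj clQ _ _; last by rewrite Qa enP.
by case: Pp.
Qed.

Definition cnull (N : set C) :=
  forall P, cperfect P -> exists Q, [/\ cperfect Q, Q `<=` P & Q `&` N = set0].

Lemma marczewski_nullE N : marczewski_null N <-> cnull N.
Proof.
by split=> Nnull P /perfectE Pp; have [Q [/perfectE ? ? ?]] := Nnull P Pp; exists Q.
Qed.

Record stage := Stage { stage_point : C; stage_set : set C; stage_type : option C }.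

Section Construction.
Variables (Y : set C) (Pe : C -> set C).
Hypotheses (Ybig : forall P, cperfect P -> ~ small (Y `&` P))
  (Pe_cperfect : forall a, cperfect (Pe a)).

Definition stage_spec a (h : forall b, wlt b a -> stage) (s : stage) :=
  [/\ cperfect (stage_set s), stage_set s `<=` Pe a,
      odds_typed (stage_set s) (stage_type s), Y (stage_point s) &
      ~ stage_set s (stage_point s)] /\
  [/\ forall b p, ~ stage_set s (stage_point (h b p)),
      forall b p, ~ stage_set (h b p) (stage_point s) &
      forall b p, odds (stage_point (h b p)) <> odds (stage_point s)].

Definition step a (h : forall b, wlt b a -> stage) : stage :=
  if pselect (exists s, stage_spec a h s) is left e then projT1 (cid e)
  else Stage point set0 None.

Definition stages := Fix wlt_wf (fun=> stage) step.

Lemma stagesE a : stages a = step a (fun b _ => stages b).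
Proof.
rewrite /stages; apply: Fix_eq => x f g fg; congr step.
by apply: functional_extensionality_dep => b; apply: funext => p; exact: fg.
Qed.

Lemma step_spec a h : (exists s, stage_spec a h s) -> stage_spec a h (step a h).
Proof. by rewrite /step => ex; case: pselect => // e; case: cid. Qed.

Lemma stages_spec {a} : early a -> stage_spec a (fun b _ => stages b) (stages a).
Proof.
elim/(well_founded_ind wlt_wf): a => a IH ea; rewrite stagesE; apply: step_spec.
have [Q0 [l [Q0p Q0P Q0l]]] := cperfect_odds_typed (Pe_cperfect a).
have [Q [Qp QQ0 Qbefore]] :=
  cperfect_avoid_small Q0p (small_image (stage_point \o stages) ea).
pose S := (fun b => (stage_set (stages b), stage_type (stages b))) @` before a
  `|` [set (Q, l)].
have [|||x [Yx xbefore xS]] :=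
  @odds_typed_avoid Y S ((odds \o stage_point \o stages) @` before a) Ybig.
- exact/small_setU/small_set1/small_image.
- exact: small_image.
- move=> _ [[b ba <-]|->] /=; last exact: sub_odds_typed QQ0 Q0l.
  by have [[]] := IH b ba (early_wlt ea ba).
exists (Stage x Q l); split; split => //=.
- exact: subset_trans QQ0 Q0P.
- exact: sub_odds_typed QQ0 Q0l.
- by apply: (xS (Q, l)); right.
- by move=> b ba; apply: Qbefore; exists b.
- by move=> b ba; apply: (xS (_, _)); left; exists b.
- by move=> b ba xb; apply: xbefore; exists b.
Qed.

Definition xs a := stage_point (stages a).
Definition Qs a := stage_set (stages a).

Lemma xs_in a : early a -> Y (xs a).
Proof. by move=> /stages_spec[[]]. Qed.

Lemma Qs_cperfect a : early a -> cperfect (Qs a).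
Proof. by move=> /stages_spec[[]]. Qed.

Lemma Qs_sub a : early a -> Qs a `<=` Pe a.
Proof. by move=> /stages_spec[[]]. Qed.

Lemma xs_inj a b : early a -> early b -> xs a = xs b -> a = b.
Proof.
move=> ea eb ab; case: (wlt_trichotomy a b) => [lt_ab|//|lt_ba]; exfalso.
- by have [_ [_ _ /(_ a lt_ab)]] := stages_spec eb; apply; move: ab; rewrite /xs => ->.
- by have [_ [_ _ /(_ b lt_ba)]] := stages_spec ea; apply; move: ab; rewrite /xs => ->.
Qed.

Lemma Qs_avoid a b : early a -> early b -> ~ Qs a (xs b).
Proof.
move=> ea eb; case: (wlt_trichotomy a b) => [lt_ab|<-|lt_ba].
- by have [_ [_ /(_ a lt_ab)]] := stages_spec eb.
- by have [[]] := stages_spec ea.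
- by have [_ [/(_ b lt_ba)]] := stages_spec ea.
Qed.

End Construction.

Lemma cnull_range_injection {Y} : (forall P, cperfect P -> ~ small (Y `&` P)) ->
  exists g : C -> C, [/\ injective g, range g `<=` Y & cnull (range g)].
Proof.
move=> Ybig; have [Pe [Pe_cperfect Pe_onto]] := cperfect_enum.
have /contrapT[en en_onto] := not_small_early.
pose ia c := projT1 (cid2 (en_onto c)).
have ia_early c : early (ia c) by rewrite /ia; case: cid2.
have iaK : cancel ia en by move=> c; rewrite /ia; case: cid2.
exists (fun c => xs Y Pe (ia c)); split.
- move=> c c' /(xs_inj _ _ Ybig Pe_cperfect _ _ (ia_early c) (ia_early c')).
  by move/(congr1 en); rewrite !iaK.
- by move=> _ [c _ <-]; exact: xs_in.
move=> P Pp; have [a ea <-] := Pe_onto P Pp.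
exists (Qs Y Pe a); split; [exact: Qs_cperfect | exact: Qs_sub |].
apply/seteqP; split => // x [Qx [c _ xc]]; rewrite -xc in Qx.
exact: Qs_avoid _ _ Ybig Pe_cperfect _ _ ea (ia_early c) Qx.
Qed.

Lemma cnull_image f N : ccontinuous f -> injective f -> cnull N -> cnull (f @` N).
Proof.
move=> fc finj Nnull P Pp; have [Pf|] := pselect (P `<=` range f).
  have [Q [Qp QP QN]] := Nnull _ (cperfect_preimage fc finj Pp Pf).
  exists (f @` Q); split; first exact: cperfect_image.
    by move=> _ [q /QP Pfq <-].
  apply/seteqP; split => // _ [[q Qq <-] [n Nn /finj nq]].
  suff : (Q `&` N) q by rewrite QN.
  by split => //; rewrite -nq.
move=> /existsNP[p /not_implyP[Pp' nfp]].
have [k kf] := cclosed_cylinder_disjoint (cclosed_image fc (fun x _ => I)) nfp.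
exists (P `&` agree k p); split; [exact: cperfect_cylinder | by move=> ? [] |].
apply/seteqP; split => // y [[_ py] [n _ ny]].
by apply: (kf y _ py); exists n.
Qed.

Lemma cnull_of_small_traces X :
  (forall P, cperfect P -> exists Q, [/\ cperfect Q, Q `<=` P & small (X `&` Q)]) ->
  cnull X.
Proof.
move=> Xsmall P Pp; have [Q0 [Q0p Q0P sXQ0]] := Xsmall P Pp.
have [Q [Qp QQ0 QX]] := cperfect_avoid_small Q0p sXQ0.
exists Q; split => //; first exact: subset_trans QQ0 Q0P.
by apply/seteqP; split => // q [Qq Xq]; apply: (QX q) => //; split => //; exact: QQ0.
Qed.

Lemma preimage_not_small {f X Z} : ccontinuous f -> injective f -> range f `<=` Z ->
  (forall Q, cperfect Q -> Q `<=` Z -> ~ small (X `&` Q)) ->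
  forall P, cperfect P -> ~ small (f @^-1` X `&` P).
Proof.
move=> fc finj fZ Zbig P Pp sXP; apply: (Zbig (f @` P)); first exact: cperfect_image.
  by move=> _ [z _ <-]; apply: fZ; exists z.
apply: sub_small (small_image f sXP) => x [Xx [z Pz zx]].
by exists z; rewrite // /preimage /= zx.
Qed.

Local Open Scope card_scope.

Theorem lemma2p3 (X : set cantor_space) :
  X #= [set: cantor_space] ->
  exists X' : set cantor_space,
    [/\ X' `<=` X, X' #= [set: cantor_space] & marczewski_null X'].
Proof.
move=> Xc.
have [[Z [Zp Zbig]]|Xsmall] := pselect (exists Z, cperfect Z /\
  forall Q, cperfect Q -> Q `<=` Z -> ~ small (X `&` Q)); last first.
  exists X; split => //; apply/marczewski_nullE/cnull_of_small_traces => P Pp.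
  apply: contrapT => nQ; apply: Xsmall; exists P; split => // Q Qp QP sXQ.
  by apply: nQ; exists Q.
have [f [fc finj fZ]] := cperfect_embedding Zp.
have [g [ginj gX gnull]] := cnull_range_injection (preimage_not_small fc finj fZ Zbig).
exists (range (f \o g)); split.
- by move=> _ [c _ <-]; apply: gX; exists c.
- exact: inj_card_eq (in2W (inj_comp finj ginj)).
- by apply/marczewski_nullE; rewrite -(image_comp g f); exact: cnull_image.
Qed.
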